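(* Let $\theta_1,\theta_2$ be (unkeyed) proof labels and let $m\neq n$ be keys. Then $\theta_1\smile\theta_2$ if and only if $\theta_1[m]\mathrel\iota\theta_2[n]$.
   Context: Names $\mathsf N$ with bijection $\overline\cdot$ onto disjoint co-names; $\mathsf L=\mathsf N\cup\overline{\mathsf N}\cup\{\tau\}$ ($\alpha$ over $\mathsf L$, $\lambda$ over $\mathsf L\setminus\{\tau\}$); $\mathsf K$ a set of keys. Directions $D\in\{\mathrm L,\mathrm R\}$, $\bar{\mathrm L}=\mathrm R$, $\bar{\mathrm R}=\mathrm L$. Unkeyed proof labels: $\theta::=\upsilon\alpha\mid\upsilon\langle\upsilon_1\lambda,\upsilon_2\overline\lambda\rangle$, with $\upsilon,\upsilon_1,\upsilon_2\in\{|_{\mathrm L},|_{\mathrm R},+_{\mathrm L},+_{\mathrm R}\}^*$. Proof keyed labels: $\theta::=\upsilon\alpha[k]\mid\upsilon\langle\upsilon_1\lambda[k],\upsilon_2\overline\lambda[k]\rangle$, with $\mathrm{key}(\theta)=k$. For an unkeyed label $\theta$ and key $m$, $\theta[m]$ is the keyed label obtained by attaching $m$: $(\upsilon\alpha)[m]=\upsilon\alpha[m]$ and $(\upsilon\langle\upsilon_1\lambda,\upsilon_2\overline\lambda\rangle)[m]=\upsilon\langle\upsilon_1\lambda[m],\upsilon_2\overline\lambda[m]\rangle$. Concurrency $\smile$ on unkeyed proof labels is the least symmetric relation such that: (A1) $|_{\mathrm L}\theta\smile|_{\mathrm R}\theta'$ for all $\theta,\theta'$; (A2) if $\theta\smile\theta'$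 then $|_{\mathrm L}\theta\smile\langle\theta',\theta''\rangle$ and $|_{\mathrm R}\theta\smile\langle\theta'',\theta'\rangle$ (for any $\theta''$ making these synchronisation labels); (A3) if $\theta\smile\theta'$ then $|_D\theta\smile|_D\theta'$ and $+_D\theta\smile+_D\theta'$; (A4) if $\theta_{\mathrm L}\smile\theta_{\mathrm L}'$ and $\theta_{\mathrm R}\smile\theta_{\mathrm R}'$ then $\langle\theta_{\mathrm L},\theta_{\mathrm R}\rangle\smile\langle\theta_{\mathrm L}',\theta_{\mathrm R}'\rangle$. Independence $\iota$ on proof keyed labels is the least relation closed under ($\theta_{\mathrm L},\theta_{\mathrm R}$ components of a synchronisation label): (C1) $+_D\theta\mathrel\iota+_D\theta'$ if $\theta\mathrel\iota\theta'$; (P1) $|_D\theta\mathrel\iota|_D\theta'$ if $\theta\mathrel\iota\theta'$; (P2$_k$) $|_D\theta\mathrel\iota|_{\bar D}\theta'$ if $\mathrm{key}(\theta)\ne\mathrm{key}(\theta')$; (S1) $|_D\theta\mathrel\iota\langle\theta_{\mathrm L},\theta_{\mathrm R}\rangle$ if $\theta\mathrel\iota\theta_D$; (S2) $\langle\theta_{\mathrm L},\theta_{\mathrm R}\rangle\mathrel\iota|_D\theta$ if $\theta_D\mathrel\iota\theta$; (S3) $\langle\theta_1,\theta_2\rangle\mathrel\iota\langle\theta_1',\theta_2'\rangle$ if $\theta_1\mathrel\iota\theta_1'$ and $\theta_2\mathrel\iota\theta_2'$. *)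

From Stdlib Require Import List.
Import ListNotations.
Set Implicit Arguments.

Section Labels.
Variables (N : Type) (K : Type).

Inductive vis : Type := VName (a : N) | VCoName (a : N).

Inductive act : Type := AVis (l : vis) | ATau.

Definition co (l : vis) : vis :=
  match l with VName a => VCoName a | VCoName a => VName a end.

Inductive dir : Type := DL | DR.
Definition dbar (d : dir) : dir := match d with DL => DR | DR => DL end.
Inductive op : Type := OPar (d : dir) | OSum (d : dir).

(* Unkeyed proof labels:
   ULab u a            = u alpha
   USync u u1 l u2     = u < u1 l , u2 (co l) >                       *)
Inductive ulabel : Type :=
  | ULab (u : list op) (a : act)
  | USync (u : list op) (u1 : list op) (l : vis) (u2 : list op).

(* Proof keyed labels:
   KLab u a k          = u alpha[k]
   KSync u u1 l u2 k   = u < u1 l[k] , u2 (co l)[k] >                 *)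
Inductive klabel : Type :=
  | KLab (u : list op) (a : act) (k : K)
  | KSync (u : list op) (u1 : list op) (l : vis) (u2 : list op) (k : K).

Definition key (t : klabel) : K :=
  match t with KLab _ _ k => k | KSync _ _ _ _ k => k end.

Definition attach (t : ulabel) (m : K) : klabel :=
  match t with
  | ULab u a => KLab u a m
  | USync u u1 l u2 => KSync u u1 l u2 m
  end.

Definition upre (o : op) (t : ulabel) : ulabel :=
  match t with
  | ULab u a => ULab (o :: u) a
  | USync u u1 l u2 => USync (o :: u) u1 l u2
  end.

Definition kpre (o : op) (t : klabel) : klabel :=
  match t with
  | KLab u a k => KLab (o :: u) a k
  | KSync u u1 l u2 k => KSync (o :: u) u1 l u2 k
  end.

Inductive conc : ulabel -> ulabel -> Prop :=
  | conc_sym : forall t t', conc t t' -> conc t' t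
  | conc_A1 : forall t t', conc (upre (OPar DL) t) (upre (OPar DR) t')
  | conc_A2L : forall t u1 l u2,
      conc t (ULab u1 (AVis l)) ->
      conc (upre (OPar DL) t) (USync [] u1 l u2)
  | conc_A2R : forall t u1 l u2,
      conc t (ULab u2 (AVis (co l))) ->
      conc (upre (OPar DR) t) (USync [] u1 l u2)
  | conc_A3par : forall d t t', conc t t' ->
      conc (upre (OPar d) t) (upre (OPar d) t')
  | conc_A3sum : forall d t t', conc t t' ->
      conc (upre (OSum d) t) (upre (OSum d) t')
  | conc_A4 : forall u1 l u2 u1' l' u2',
      conc (ULab u1 (AVis l)) (ULab u1' (AVis l')) ->
      conc (ULab u2 (AVis (co l))) (ULab u2' (AVis (co l'))) ->
      conc (USync [] u1 l u2) (USync [] u1' l' u2').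

Definition kcomp (d : dir) (u1 : list op) (l : vis) (u2 : list op) (k : K)
  : klabel :=
  match d with
  | DL => KLab u1 (AVis l) k
  | DR => KLab u2 (AVis (co l)) k
  end.

Inductive indep : klabel -> klabel -> Prop :=
  | indep_C1 : forall d t t', indep t t' ->
      indep (kpre (OSum d) t) (kpre (OSum d) t')
  | indep_P1 : forall d t t', indep t t' ->
      indep (kpre (OPar d) t) (kpre (OPar d) t')
  | indep_P2 : forall d t t', key t <> key t' ->
      indep (kpre (OPar d) t) (kpre (OPar (dbar d)) t')
  | indep_S1 : forall d t u1 l u2 k,
      indep t (kcomp d u1 l u2 k) ->
      indep (kpre (OPar d) t) (KSync [] u1 l u2 k)
  | indep_S2 : forall d t u1 l u2 k,
      indep (kcomp d u1 l u2 k) t ->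
      indep (KSync [] u1 l u2 k) (kpre (OPar d) t)
  | indep_S3 : forall u1 l u2 k u1' l' u2' k',
      indep (kcomp DL u1 l u2 k) (kcomp DL u1' l' u2' k') ->
      indep (kcomp DR u1 l u2 k) (kcomp DR u1' l' u2' k') ->
      indep (KSync [] u1 l u2 k) (KSync [] u1' l' u2' k').

End Labels.

(* Each rule of concurrency corresponds to a rule of independence: (A1) to
   (P2_k), (A2) to (S1)/(S2), (A3) to (P1)/(C1), (A4) to (S3).  Attaching keys
   commutes with prefixing and with taking synchronisation components, so a
   derivation of either relation translates rule by rule into one of the
   other.  The only side condition, [key t <> key t'] in (P2_k), is met because
   the two sides carry the distinct keys m and n (from independence back to
   concurrency no condition on the keys is needed); the symmetry rule of
   concurrency is matched by the fact that independence is symmetric. *)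
From Stdlib Require Import List.
Import ListNotations.

Section Correspondence.
Variables N K : Type.

Definition ucomp (d : dir) (u1 : list op) (l : vis N) (u2 : list op) : ulabel N :=
  match d with
  | DL => ULab u1 (AVis l)
  | DR => ULab u2 (AVis (co l))
  end.

Lemma attach_upre (o : op) (t : ulabel N) (m : K) :
  attach (upre o t) m = kpre o (attach t m).
Proof. now destruct t. Qed.

Lemma kcomp_attach (d : dir) u1 (l : vis N) u2 (k : K) :
  kcomp d u1 l u2 k = attach (ucomp d u1 l u2) k.
Proof. now destruct d. Qed.

Lemma kpre_attach_inv (o : op) (t : klabel N K) (t1 : ulabel N) (m : K) :
  kpre o t = attach t1 m -> exists t1', t1 = upre o t1' /\ t = attach t1' m.
Proof.
  destruct t as [u a k | u u1 l u2 k], t1 as [v b | v v1 l' v2];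
    simpl; intro E; try discriminate; injection E; intros; subst.
  - now exists (ULab u b).
  - now exists (USync u v1 l' v2).
Qed.

Lemma USync_attach_inv u1 (l : vis N) u2 (k : K) (t : ulabel N) (m : K) :
  KSync [] u1 l u2 k = attach t m -> t = USync [] u1 l u2 /\ k = m.
Proof. destruct t; simpl; intro E; [discriminate | now injection E; intros; subst]. Qed.

Lemma conc_A2 (d : dir) (t : ulabel N) u1 (l : vis N) u2 :
  conc t (ucomp d u1 l u2) -> conc (upre (OPar d) t) (USync [] u1 l u2).
Proof. destruct d; [apply conc_A2L | apply conc_A2R]. Qed.

Lemma indep_sym (a b : klabel N K) : indep a b -> indep b a.
Proof.
  induction 1.
  - now apply indep_C1.
  - now apply indep_P1.
  - assert (Hd : OPar d = OPar (dbar (dbar d))) by now destruct d.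
    rewrite Hd; now apply indep_P2.
  - now apply indep_S2.
  - now apply indep_S1.
  - now apply indep_S3.
Qed.

Lemma conc_indep_attach (t1 t2 : ulabel N) :
  conc t1 t2 -> forall m n : K, m <> n -> indep (attach t1 m) (attach t2 n).
Proof.
  induction 1 as [t t' _ IH | t t' | t u1 l u2 _ IH | t u1 l u2 _ IH
                 | d t t' _ IH | d t t' _ IH
                 | u1 l u2 u1' l' u2' _ IHL _ IHR];
    intros m n Hmn; rewrite ?attach_upre.
  - now apply indep_sym, IH.
  - apply (indep_P2 DL); now destruct t, t'.
  - apply (indep_S1 DL); now apply IH.
  - apply (indep_S1 DR); now apply IH.
  - now apply indep_P1, IH.
  - now apply indep_C1, IH.
  - now apply indep_S3; [apply IHL | apply IHR].
Qed.

Lemma indep_attach_conc (a b : klabel N K) :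
  indep a b -> forall (t1 t2 : ulabel N) (m n : K),
  a = attach t1 m -> b = attach t2 n -> conc t1 t2.
Proof.
  induction 1 as [d t t' _ IH | d t t' _ IH | d t t' _
                 | d t u1 l u2 k _ IH | d t u1 l u2 k _ IH
                 | u1 l u2 k u1' l' u2' k' _ IHL _ IHR];
    intros t1 t2 m n E1 E2.
  - destruct (kpre_attach_inv _ _ _ _ E1) as [x [-> Hx]].
    destruct (kpre_attach_inv _ _ _ _ E2) as [y [-> Hy]].
    apply conc_A3sum; now apply (IH x y m n).
  - destruct (kpre_attach_inv _ _ _ _ E1) as [x [-> Hx]].
    destruct (kpre_attach_inv _ _ _ _ E2) as [y [-> Hy]].
    apply conc_A3par; now apply (IH x y m n).
  - destruct (kpre_attach_inv _ _ _ _ E1) as [x [-> _]].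
    destruct (kpre_attach_inv _ _ _ _ E2) as [y [-> _]].
    destruct d; [apply conc_A1 | apply conc_sym, conc_A1].
  - destruct (kpre_attach_inv _ _ _ _ E1) as [x [-> Hx]].
    destruct (USync_attach_inv _ _ _ _ _ _ E2) as [-> ->].
    apply conc_A2; apply (IH x _ m n); [exact Hx | apply kcomp_attach].
  - destruct (USync_attach_inv _ _ _ _ _ _ E1) as [-> ->].
    destruct (kpre_attach_inv _ _ _ _ E2) as [y [-> Hy]].
    apply conc_sym, conc_A2, conc_sym.
    apply (IH _ y m n); [apply kcomp_attach | exact Hy].
  - destruct (USync_attach_inv _ _ _ _ _ _ E1) as [-> ->].
    destruct (USync_attach_inv _ _ _ _ _ _ E2) as [-> ->].
    apply conc_A4; [apply (IHL _ _ m n) | apply (IHR _ _ m n)]; reflexivity.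
Qed.

End Correspondence.

Theorem lemmaB3 (N K : Type) (t1 t2 : ulabel N) (m n : K) :
  m <> n -> (conc t1 t2 <-> indep (attach t1 m) (attach t2 n)).
Proof.
  intro Hmn; split.
  - intro H; now apply conc_indep_attach.
  - intro H; eapply indep_attach_conc; [exact H | reflexivity | reflexivity].
Qed.
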